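(* Let $G$ be a simple graph with $8$ nodes, $16$ edges and minimum degree $\delta(G)=2$. Then $m_k(K_{4,4})<m_k(G)$ for every $k\in\{5,6,7,8\}$.
   Context: For a graph $H$, $m_k(H)$ denotes the number of edge sets $C\subseteq E(H)$ with $|C|=k$ such that $H-C$ is disconnected (cutsets of cardinality $k$). $K_{4,4}$ is the complete bipartite graph with two parts of size $4$. *)

From mathcomp Require Import all_boot.
Set Implicit Arguments. Unset Strict Implicit. Unset Printing Implicit Defensive.

Definition simple_graph (V : finType) (e : rel V) : Prop :=
  symmetric e /\ irreflexive e.

Definition edges (V : finType) (e : rel V) : {set {set V}} :=
  [set A : {set V} | [exists x, exists y, e x y && (A == [set x; y])]].

Definition degree (V : finType) (e : rel V) (v : V) : nat := #|[set w | e v w]|.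

Definition min_degree_eq (V : finType) (e : rel V) (d : nat) : Prop :=
  (forall v, d <= degree e v) /\ (exists v, degree e v = d).

Definition connected_edges (V : finType) (F : {set {set V}}) : bool :=
  [forall x, forall y, connect (fun u v => [set u; v] \in F) x y].

Definition m_k (V : finType) (e : rel V) (k : nat) : nat :=
  #|[set C : {set {set V}} | (C \subset edges e) && (#|C| == k)
                              && ~~ connected_edges (edges e :\: C)]|.

Definition K44 : rel 'I_8 := fun x y => (x < 4) != (y < 4).

From mathcomp Require Import all_boot.
Set Implicit Arguments. Unset Strict Implicit. Unset Printing Implicit Defensive.

(* A set of k edges containing all edges at a vertex x isolates x.  For a
   vertex of degree 2 these sets alone outnumber the k-cutsets of K_{4,4}
   when k <= 7.  For k = 8, Bonferroni's inequality is applied to these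
   families for several vertices: two stars share at most one edge, so the
   intersection of the families of x and y consists of the 8-sets containing
   d_x + d_y - 1 fixed edges.  Either a second vertex has degree 2, or the
   remaining degrees form a partition of 30 into seven parts between 3 and 7,
   and each case is checked numerically.  The cutsets of K_{4,4} are counted
   by enumerating subsets of its 16 edges as bit vectors. *)

Fixpoint sum_pairs (I : Type) (f : I -> I -> nat) (s : seq I) : nat :=
  if s is i :: s' then sumn [seq f i j | j <- s'] + sum_pairs f s' else 0.

Lemma leq_sum_pairs (I : eqType) (f g : I -> I -> nat) (s : seq I) : uniq s ->
  {in s &, forall i j, i != j -> f i j <= g i j} -> sum_pairs f s <= sum_pairs g s.
Proof.
elim: s => //= i s IHs /andP[i_notin_s uniq_s] le_fg; apply: leq_add.
  rewrite !sumnE !big_map big_seq [X in _ <= X]big_seq; apply: leq_sum => j js.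
  by apply: le_fg; rewrite ?inE ?eqxx ?js ?orbT //; apply: contraNneq i_notin_s => ->.
by apply: IHs => // j k js ks; apply: le_fg; rewrite inE ?js ?ks orbT.
Qed.

Lemma sum_pairs_map (I J : Type) (g : I -> J) (f : J -> J -> nat) (s : seq I) :
  sum_pairs (fun i j => f (g i) (g j)) s = sum_pairs f (map g s).
Proof. by elim: s => //= i s ->; rewrite -map_comp. Qed.

Lemma eq_sum_pairs (I : Type) (f g : I -> I -> nat) : f =2 g -> sum_pairs f =1 sum_pairs g.
Proof. by move=> eq_fg; elim=> //= i s ->; rewrite (eq_map (eq_fg i)). Qed.

Lemma leq_card_bigcup (T : finType) (I : Type) (A : I -> {set T}) (s : seq I) :
  #|\bigcup_(i <- s) A i| <= \sum_(i <- s) #|A i|.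
Proof.
elim: s => [|i s IHs]; first by rewrite !big_nil cards0.
by rewrite !big_cons (leq_trans (leq_card_setU _ _)) // leq_add2l.
Qed.

Lemma bonferroni (T : finType) (I : Type) (A : I -> {set T}) (s : seq I) :
  sumn [seq #|A i| | i <- s] <= #|\bigcup_(i <- s) A i| + sum_pairs (fun i j => #|A i :&: A j|) s.
Proof.
elim: s => [|i s IHs] /=; first by rewrite big_nil cards0.
apply: leq_trans (leq_add (leqnn #|A i|) IHs) _.
rewrite addnA big_cons -cardsUI -addnA leq_add2l leq_add2r big_distrr /=.
by rewrite sumnE big_map leq_card_bigcup.
Qed.

Definition n_supersets (n k s : nat) : nat := if s <= k then 'C(n - s, k - s) else 0.

Definition supersets (T : finType) (E S : {set T}) k : {set {set T}} :=
  [set C : {set T} | [&& C \subset E, #|C| == k & S \subset C]].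

Lemma supersetsI (T : finType) (E S S' : {set T}) k :
  supersets E S k :&: supersets E S' k = supersets E (S :|: S') k.
Proof.
apply/setP=> C; rewrite !inE subUset.
by case: (C \subset E); case: (#|C| == k); case: (S \subset C).
Qed.

Lemma card_supersets (T : finType) (E S : {set T}) k : S \subset E ->
  #|supersets E S k| = n_supersets #|E| k #|S|.
Proof.
move=> sSE; rewrite /n_supersets; case: leqP => [leSk | ltkS]; last first.
  apply/eqP; rewrite cards_eq0; apply/eqP/setP => C; rewrite !inE.
  by apply: contraTF ltkS => /and3P[_ /eqP <- sSC]; rewrite -leqNgt subset_leq_card.
rewrite -(cardsDS sSE) -cards_draws.
set D := [set B : {set T} | B \subset E :\: S & _].
have injD : {in D &, injective (fun B => B :|: S)}.
  have UDK (B : {set T}) : [disjoint B & S] -> (B :|: S) :\: S = B.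
    by move=> dBS; rewrite setDUl setDv setU0; apply/setDidPl.
  move=> B1 B2; rewrite !inE !subsetD => /andP[/andP[_ dB1] _] /andP[/andP[_ dB2] _] eqB.
  by rewrite -(UDK _ dB1) -(UDK _ dB2) eqB.
rewrite -(card_in_imset injD).
apply: eq_card => C; rewrite inE; apply/and3P/imsetP => [[sCE /eqP cardC sSC] | [B]].
  exists (C :\: S); first by rewrite inE setSD // cardsDS // cardC eqxx.
  by rewrite -{1}(setID C S) (setIidPr sSC) setUC.
rewrite inE subsetD => /andP[/andP[sBE dBS] /eqP cardB] ->.
split; rewrite ?subsetUr ?subUset ?sBE //.
by rewrite cardsU (disjoint_setI0 dBS) cards0 subn0 cardB subnK.
Qed.

Lemma n_supersets_antitone n k s s' : k <= n -> s <= s' -> n_supersets n k s' <= n_supersets n k s.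
Proof.
move=> le_kn /subnK <-; elim: (s' - s) => [|d IHd] //; apply: leq_trans IHd.
rewrite /n_supersets addSn; case: (leqP (d + s).+1 k) => // lt_k.
rewrite (ltnW lt_k) -(subnSK lt_k) -(subnSK (leq_trans lt_k le_kn)).
by rewrite binS leq_addl.
Qed.

Section SimpleGraph.
Variables (V : finType) (e : rel V).
Hypothesis e_simple : simple_graph e.

Lemma edge_sym x y : e x y = e y x.
Proof. by case: e_simple => e_sym _; rewrite e_sym. Qed.

Lemma edge_irr x : e x x = false.
Proof. by case: e_simple => _ e_irr; rewrite e_irr. Qed.

Lemma edgesP A : reflect (exists x y, e x y /\ A = [set x; y]) (A \in edges e).
Proof.
rewrite inE; apply: (iffP existsP) => [[x /existsP[y /andP[exy /eqP ->]]] | [x [y [exy ->]]]].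
  by exists x, y.
by exists x; apply/existsP; exists y; rewrite exy eqxx.
Qed.

Lemma card_edge A : A \in edges e -> #|A| = 2.
Proof.
case/edgesP=> x [y [exy ->]]; rewrite cards2; case: eqP exy => // ->.
by rewrite edge_irr.
Qed.

Definition edges_at x : {set {set V}} := [set A in edges e | x \in A].

Lemma mem_edges_at x A : (A \in edges_at x) = (A \in edges e) && (x \in A).
Proof. exact: in_set. Qed.

Lemma edges_atE x : edges_at x = [set [set x; y] | y in [set y | e x y]].
Proof.
apply/setP=> A; rewrite mem_edges_at; apply/andP/imsetP => [[/edgesP[a [b [eab ->]]]] | [y]].
  rewrite !inE => /orP[] /eqP ->; first by exists b; rewrite ?inE.
  by exists a; rewrite ?inE 1?edge_sym // setUC.
by rewrite inE => exy ->; split; [apply/edgesP; exists x, y | rewrite set21].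
Qed.

Lemma card_edges_at x : #|edges_at x| = degree e x.
Proof.
rewrite edges_atE card_in_imset // => y z; rewrite !inE => exy exz eq_yz.
have : y \in [set x; z] by rewrite -eq_yz set22.
by rewrite !inE => /orP[] /eqP // eq_yx; rewrite eq_yx edge_irr in exy.
Qed.

Lemma card_edges_atI x y : x != y -> #|edges_at x :&: edges_at y| <= 1.
Proof.
move=> neq_xy; rewrite -(cards1 [set x; y]); apply/subset_leq_card/subsetP => A.
rewrite in_setI !mem_edges_at => /andP[/andP[/edgesP[a [b [_ ->]]] xA] /andP[_ yA]].
move: xA yA neq_xy; rewrite !inE => /orP[] /eqP -> /orP[] /eqP ->;
  by rewrite ?eqxx // setUC.
Qed.

Lemma degree_lt_card x : degree e x < #|V|.
Proof.
rewrite (cardD1 x) add1n ltnS; apply/subset_leq_card/subsetP => y.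
by rewrite !inE; case: eqP => [-> | _]; rewrite ?edge_irr.
Qed.

Lemma handshake : \sum_x degree e x = 2 * #|edges e|.
Proof.
have degE x : degree e x = \sum_(A in edges e) (x \in A).
  rewrite -card_edges_at -sum1_card big_mkcond [RHS]big_mkcond; apply: eq_bigr => A _.
  by rewrite mem_edges_at; case: (A \in edges e); case: (x \in A).
rewrite (eq_bigr _ (fun x _ => degE x)) exchange_big /= -sum1_card big_distrr /=.
apply: eq_bigr => A /card_edge <-; rewrite muln1 -sum1_card [RHS]big_mkcond /=.
by apply: eq_bigr => x _; case: (x \in A).
Qed.

Lemma edges_at_cut x (C : {set {set V}}) : 1 < #|V| -> edges_at x \subset C ->
  ~~ connected_edges (edges e :\: C).
Proof.
move=> V_gt1 sEC; have [y] : exists y, y != x.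
  by move: V_gt1; rewrite (cardD1 x) ltnS => /card_gt0P[y /andP[]]; exists y.
apply: contraNN => /forallP/(_ x)/forallP/(_ y)/connectP[[|z p] /=]; first by move=> _ ->.
case/andP; rewrite inE => /andP[nCxz Exz] _ _.
by rewrite (subsetP sEC) // mem_edges_at Exz set21 in nCxz.
Qed.

Lemma bonferroni_m_k k (s : seq V) (N := n_supersets #|edges e| k)
    (ds := [seq degree e x | x <- s]) :
  1 < #|V| -> k <= #|edges e| -> uniq s ->
  sumn (map N ds) <= m_k e k + sum_pairs (fun a b => N (a + b - 1)) ds.
Proof.
move=> V_gt1 le_k_e uniq_s; rewrite /ds -sum_pairs_map -map_comp.
pose A x := supersets (edges e) (edges_at x) k.
have edges_at_sub x : edges_at x \subset edges e.
  by apply/subsetP => B; rewrite mem_edges_at => /andP[].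
have cardA x : #|A x| = N (degree e x).
  by rewrite card_supersets // card_edges_at.
rewrite -(eq_map cardA); apply: leq_trans (bonferroni A s) _; apply: leq_add.
  rewrite /m_k bigcup_seq; apply/subset_leq_card/bigcupsP => x _; apply/subsetP => C.
  by rewrite !inE => /and3P[-> -> /(edges_at_cut V_gt1)].
apply: leq_sum_pairs => // x y _ _ neq_xy.
rewrite supersetsI card_supersets ?subUset ?edges_at_sub //.
apply: n_supersets_antitone => //.
by rewrite cardsU !card_edges_at leq_sub2l // card_edges_atI.
Qed.

Lemma n_supersets_degree_le_m_k k x : 1 < #|V| -> k <= #|edges e| ->
  n_supersets #|edges e| k (degree e x) <= m_k e k.
Proof.
move=> V_gt1 le_k_e.
by have := bonferroni_m_k (s := [:: x]) V_gt1 le_k_e isT; rewrite /= !addn0.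
Qed.
End SimpleGraph.

Fixpoint bitseqs (n k : nat) : seq bitseq :=
  if n is n'.+1 then
    (if k is k'.+1 then map (cons true) (bitseqs n' k') else [::]) ++
    map (cons false) (bitseqs n' k)
  else if k is 0 then [:: [::]] else [::].

Lemma mem_bitseqs (bs : bitseq) : bs \in bitseqs (size bs) (count id bs).
Proof. by elim: bs => //= -[] bs IHbs; rewrite mem_cat map_f ?orbT. Qed.

(* Union-find on the vertices 0, ..., n-1 of a graph given by an edge list.
   Only soundness is proved, which suffices for an upper bound on m_k. *)
Definition relabel (L : seq nat) (p : nat * nat) : seq nat :=
  [seq if l == nth 0 L p.1 then nth 0 L p.2 else l | l <- L].

Definition labels (n : nat) (ps : seq (nat * nat)) : seq nat := foldl relabel (iota 0 n) ps.

Definition connectedb (n : nat) (ps : seq (nat * nat)) : bool :=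
  let L := labels n ps in all (pred1 (nth 0 L 0)) L.

Section UnionFind.
Variables (T : finType) (f : nat -> T) (r : rel T) (n : nat).
Hypothesis r_sym : symmetric r.

Definition sound_labels (L : seq nat) : Prop :=
  size L = n /\ forall x, x < n -> connect r (f x) (f (nth 0 L x)).

Lemma sound_relabel L p : sound_labels L -> p.1 < n -> p.2 < n -> r (f p.1) (f p.2) ->
  sound_labels (relabel L p).
Proof.
case: p => a b [size_L sound_L] /= lt_a lt_b r_ab; split; first by rewrite size_map.
move=> x lt_x; rewrite (nth_map 0) ?size_L //; case: eqP => [eq_x | _]; last exact: sound_L.
have La_a : connect r (f (nth 0 L a)) (f a) by rewrite (sym_connect_sym r_sym) sound_L.
apply: connect_trans (sound_L x lt_x) _; rewrite eq_x.
exact: connect_trans La_a (connect_trans (connect1 r_ab) (sound_L b lt_b)).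
Qed.

Lemma sound_labels_labels ps : {in ps, forall p, [/\ p.1 < n, p.2 < n & r (f p.1) (f p.2)]} ->
  sound_labels (labels n ps).
Proof.
rewrite /labels; have : sound_labels (iota 0 n).
  by split=> [|x lt_x]; rewrite ?size_iota ?nth_iota.
elim: ps (iota 0 n) => //= p ps IHps L sound_L ps_ok; apply: IHps => [|q qps].
  by have [] := ps_ok p (mem_head _ _); apply: sound_relabel.
by apply: ps_ok; rewrite inE qps orbT.
Qed.

Lemma connectedb_connect ps : {in ps, forall p, [/\ p.1 < n, p.2 < n & r (f p.1) (f p.2)]} ->
  connectedb n ps -> forall x y, x < n -> y < n -> connect r (f x) (f y).
Proof.
move=> ps_ok; have [size_L sound_L] := sound_labels_labels ps_ok.
rewrite /connectedb; set L := labels n ps => /allP all_L.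
have to_root x : x < n -> connect r (f x) (f (nth 0 L 0)).
  move=> lt_x; have /eqP <- : nth 0 L x == nth 0 L 0 by apply: all_L; rewrite mem_nth ?size_L.
  exact: sound_L.
move=> x y lt_x lt_y; apply: connect_trans (to_root x lt_x) _.
by rewrite (sym_connect_sym r_sym) to_root.
Qed.
End UnionFind.

Section EdgeList.
Variables (V : finType) (e : rel V) (f : nat -> V) (n : nat) (ps : seq (nat * nat)).

Definition pair_set (p : nat * nat) : {set V} := [set f p.1; f p.2].

Hypotheses (f_onto : forall v, exists2 x, x < n & v = f x)
  (ps_lt : all (fun p => (p.1 < n) && (p.2 < n)) ps)
  (edges_ps : edges e =i map pair_set ps) (uniq_ps : uniq (map pair_set ps)).

Definition edge_code (C : {set {set V}}) : bitseq := [seq pair_set p \in C | p <- ps].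

Lemma edge_codeE (C : {set {set V}}) : edge_code C = map (mem C) (map pair_set ps).
Proof. by rewrite -map_comp. Qed.

Lemma count_edge_code (C : {set {set V}}) : C \subset edges e -> count id (edge_code C) = #|C|.
Proof.
move=> sCE; rewrite edge_codeE count_map -size_filter -(card_uniqP (filter_uniq _ uniq_ps)).
apply: eq_card => A; rewrite mem_filter andb_idr // -edges_ps; exact: (subsetP sCE).
Qed.

Lemma edge_code_inj : {in [pred C : {set {set V}} | C \subset edges e] &, injective edge_code}.
Proof.
move=> C1 C2 sC1E sC2E; rewrite !edge_codeE => /eq_in_map eq_C; apply/setP => A.
have [A_ps | A_ps] := boolP (A \in map pair_set ps); first exact: eq_C.
rewrite -edges_ps in A_ps.
by apply/idP/idP => [/(subsetP sC1E) | /(subsetP sC2E)]; rewrite (negbTE A_ps).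
Qed.

Lemma connected_edges_code (C : {set {set V}}) :
  connectedb n (mask (map negb (edge_code C)) ps) -> connected_edges (edges e :\: C).
Proof.
pose r u v := [set u; v] \in edges e :\: C.
have r_sym : symmetric r by move=> u v; rewrite /r setUC.
rewrite -map_comp -filter_mask => /(connectedb_connect r_sym) conn.
apply/forallP => u; apply/forallP => w.
have [[x lt_x ->] [y lt_y ->]] := (f_onto u, f_onto w).
apply: conn => // p; rewrite mem_filter => /andP[/= p_notin_C p_ps].
have /andP[lt_p1 lt_p2] := allP ps_lt p p_ps; split => //.
by rewrite /r in_setD p_notin_C edges_ps; apply: (map_f pair_set p_ps).
Qed.

Lemma m_k_le_count_bitseqs k :
  m_k e k <= count (fun bs => ~~ connectedb n (mask (map negb bs) ps)) (bitseqs (size ps) k).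
Proof.
rewrite /m_k cardE -(size_map edge_code) -size_filter; apply: uniq_leq_size.
  rewrite map_inj_in_uniq ?enum_uniq // => C1 C2.
  by rewrite !mem_enum !inE => /andP[/andP[sC1E _] _] /andP[/andP[sC2E _] _]; apply: edge_code_inj.
move=> bs /mapP[C]; rewrite mem_enum inE => /andP[/andP[sCE /eqP card_C] disconn] ->.
rewrite mem_filter (contra (@connected_edges_code C)) //=.
by rewrite -{1}(size_map (fun p => pair_set p \in C) ps) -card_C -count_edge_code ?mem_bitseqs.
Qed.
End EdgeList.

Definition K44_pairs : seq (nat * nat) := [seq (a, b) | a <- iota 0 4, b <- iota 4 4].

Lemma mem_K44_pairs a b : ((a, b) \in K44_pairs) = (a < 4) && (4 <= b < 8).
Proof.
apply/allpairsP/andP => [[[a' b'] [a'_in b'_in [-> ->]]] | [lt_a b_in]].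
  by move: a'_in b'_in; rewrite !mem_iota.
by exists (a, b); rewrite !mem_iota.
Qed.

Lemma inord8_eq a b : a < 8 -> b < 8 -> (@inord 7 a == inord b) = (a == b).
Proof. by move=> lt_a lt_b; rewrite -val_eqE /= !inordK. Qed.

Lemma K44_edgesE : edges K44 =i [seq pair_set (@inord 7) p | p <- K44_pairs].
Proof.
have K44_pair (x y : 'I_8) : x < 4 -> K44 x y -> (val x, val y) \in K44_pairs.
  rewrite /K44 mem_K44_pairs ltn_ord andbT => lt_x; rewrite lt_x (leqNgt 4).
  by case: (y < 4).
move=> A; apply/edgesP/mapP => [[x [y [Kxy ->]]] | [[a b] ab_in ->]].
  have [lt_x | ge_x] := ltnP x 4.
    by exists (val x, val y); rewrite ?K44_pair // /pair_set /= !inord_val.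
  exists (val y, val x); last by rewrite /pair_set /= !inord_val setUC.
  apply: K44_pair; last by rewrite /K44 eq_sym.
  by move: Kxy; rewrite /K44 ltnNge ge_x; case: (y < 4).
move: ab_in; rewrite mem_K44_pairs => /andP[lt_a /andP[ge_b lt_b]].
exists (inord a), (inord b); split => //.
have lt8_a : a < 8 by apply: leq_trans lt_a _.
by rewrite /K44 !inordK // lt_a ltnNge ge_b.
Qed.

Lemma uniq_K44_edges : uniq [seq pair_set (@inord 7) p | p <- K44_pairs].
Proof.
rewrite map_inj_in_uniq; first by rewrite allpairs_uniq ?iota_uniq // => [[? ?] [? ?] _ _ [-> ->]].
move=> [a b] [c d]; rewrite !mem_K44_pairs /pair_set /=.
move=> /andP[lt_a /andP[ge_b lt_b]] /andP[lt_c /andP[ge_d lt_d]] eq_ab_cd.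
have lt8_a : a < 8 by apply: leq_trans lt_a _.
have lt8_c : c < 8 by apply: leq_trans lt_c _.
have : inord a \in [set @inord 7 c; inord d] by rewrite -eq_ab_cd set21.
have : inord b \in [set @inord 7 c; inord d] by rewrite -eq_ab_cd set22.
have neq_lo_hi x y : x < 4 -> 4 <= y -> (x == y) = false.
  by move=> lt_x ge_y; apply/negbTE; rewrite neq_ltn (leq_trans lt_x ge_y).
rewrite !inE !inord8_eq // [b == c]eq_sym (neq_lo_hi _ _ lt_c ge_b) (neq_lo_hi _ _ lt_a ge_d).
by rewrite orbF /= => /eqP -> /eqP ->.
Qed.

Definition K44_cut_count k : nat :=
  count (fun bs => ~~ connectedb 8 (mask (map negb bs) K44_pairs)) (bitseqs 16 k).

Lemma m_k_K44_le k : m_k K44 k <= K44_cut_count k.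
Proof.
apply: (m_k_le_count_bitseqs (f := @inord 7) (n := 8)) => //.
- by move=> v; exists (val v); rewrite ?inord_val ?ltn_ord.
- exact: K44_edgesE.
- exact: uniq_K44_edges.
Qed.

Lemma K44_cut_count_8 : K44_cut_count 8 = 4446.
Proof. by vm_compute. Qed.

(* Tabulated so that the enumeration below does not evaluate binomials. *)
Definition n_supersets_16_8 : seq nat := [:: 12870; 6435; 3003; 1287; 495; 165; 45; 9; 1].

Lemma n_supersets_16_8E s : n_supersets 16 8 s = nth 0 n_supersets_16_8 s.
Proof.
have [le_s8 | lt8s] := leqP s 8; last by rewrite /n_supersets leqNgt lt8s nth_default.
have : all (fun s => n_supersets 16 8 s == nth 0 n_supersets_16_8 s) (iota 0 9) by vm_compute.
by move/allP/(_ s); rewrite mem_iota => /(_ le_s8)/eqP.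
Qed.

Fixpoint partitions (r : seq nat) (m n t : nat) : seq (seq nat) :=
  if n is n'.+1 then
    [seq x :: s | x <- [seq x <- r | (x <= m) && (x <= t)], s <- partitions r x n' (t - x)]
  else if t is 0 then [:: [::]] else [::].

Lemma mem_partitions r m s : {subset s <= r} -> path geq m s ->
  s \in partitions r m (size s) (sumn s).
Proof.
elim: s m => //= x s IHs m sub_r /andP[le_xm path_s]; apply/allpairsPdep.
exists x, s; rewrite mem_filter sub_r ?mem_head // le_xm leq_addr addKn IHs //.
by move=> y ys; rewrite sub_r // inE ys orbT.
Qed.

Lemma bonferroni_bound_partitions :
  all (fun ds => K44_cut_count 8
                   + sum_pairs (fun a b => nth 0 n_supersets_16_8 (a + b - 1)) (2 :: ds)
                 < sumn [seq nth 0 n_supersets_16_8 d | d <- 2 :: ds])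
      (partitions (iota 3 5) 7 7 30).
Proof. by rewrite K44_cut_count_8; vm_compute. Qed.

Section EightVerticesSixteenEdges.
Variables (V : finType) (e : rel V).
Hypotheses (e_simple : simple_graph e) (card_V : #|V| = 8) (card_E : #|edges e| = 16).

Lemma bonferroni_m_8_gt (s : seq V) (N := nth 0 n_supersets_16_8)
    (ds := [seq degree e x | x <- s]) : uniq s ->
  K44_cut_count 8 + sum_pairs (fun a b => N (a + b - 1)) ds < sumn (map N ds) ->
  K44_cut_count 8 < m_k e 8.
Proof.
move=> uniq_s lt_bound; rewrite -(ltn_add2r (sum_pairs (fun a b => N (a + b - 1)) ds)).
apply: leq_trans lt_bound _.
have := bonferroni_m_k e_simple (k := 8) (s := s).
rewrite card_V card_E => /(_ isT isT uniq_s).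
by rewrite (eq_map n_supersets_16_8E) (eq_sum_pairs (fun a b => n_supersets_16_8E _)).
Qed.

Lemma m_8_gt_of_two_deg2 v w : v != w -> degree e v = 2 -> degree e w = 2 ->
  K44_cut_count 8 < m_k e 8.
Proof.
move=> neq_vw deg_v deg_w; apply: (bonferroni_m_8_gt (s := [:: v; w])).
  by rewrite /= inE neq_vw.
by rewrite /= deg_v deg_w K44_cut_count_8.
Qed.

Lemma sorted_degrees_partition v s : degree e v = 2 -> (forall w, w != v -> 3 <= degree e w) ->
  perm_eq s (rem v (enum V)) -> sorted (fun x y => degree e y <= degree e x) s ->
  [seq degree e x | x <- s] \in partitions (iota 3 5) 7 7 30.
Proof.
move=> deg_v deg_ge3 perm_s sorted_s.
have deg_s x : x \in s -> 3 <= degree e x < 8.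
  rewrite (perm_mem perm_s) (mem_rem_uniq _ (enum_uniq V)) !inE mem_enum andbT => neq_xv.
  by rewrite -card_V degree_lt_card // deg_ge3.
have size_s : size [seq degree e x | x <- s] = 7.
  by rewrite size_map (perm_size perm_s) size_rem ?mem_enum // -cardE card_V.
have sum_s : sumn [seq degree e x | x <- s] = 30.
  have := handshake e_simple; rewrite card_E.
  have -> : \sum_x degree e x = \sum_(x <- enum V) degree e x by rewrite big_enum.
  rewrite (perm_big _ (perm_to_rem (mem_enum V v))) big_cons deg_v -(perm_big _ perm_s).
  by rewrite sumnE big_map => /eqP; rewrite -[2 * 16]/(2 + 30) eqn_add2l => /eqP.
rewrite -{2}size_s -sum_s mem_partitions //.
  by move=> _ /mapP[x /deg_s deg_x ->]; rewrite mem_iota.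
rewrite path_sortedE; last by move=> a b c le_ba le_cb; apply: leq_trans le_cb le_ba.
apply/andP; split; last by rewrite sorted_map.
by apply/allP => _ /mapP[x /deg_s /andP[_ deg_x] ->].
Qed.

Lemma m_8_gt_of_one_deg2 v : degree e v = 2 -> (forall w, w != v -> 3 <= degree e w) ->
  K44_cut_count 8 < m_k e 8.
Proof.
move=> deg_v deg_ge3.
pose s := sort (fun x y => degree e y <= degree e x) (rem v (enum V)).
have perm_s : perm_eq s (rem v (enum V)) by rewrite perm_sort.
have uniq_vs : uniq (v :: s).
  by rewrite /= (perm_uniq perm_s) (perm_mem perm_s) mem_rem_uniqF ?rem_uniq ?enum_uniq.
apply: (bonferroni_m_8_gt uniq_vs); rewrite [map _ (v :: s)]/= deg_v.
apply: (allP bonferroni_bound_partitions); apply: sorted_degrees_partition deg_v deg_ge3 perm_s _.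
by apply: sort_sorted => x y; apply: leq_total.
Qed.

Lemma m_8_gt v : degree e v = 2 -> (forall w, 2 <= degree e w) -> K44_cut_count 8 < m_k e 8.
Proof.
move=> deg_v deg_ge2.
case: (pickP (fun w => (w != v) && (degree e w == 2))) => [w /andP[neq_wv /eqP deg_w] | no_w].
  exact: m_8_gt_of_two_deg2 neq_wv deg_w deg_v.
apply: (m_8_gt_of_one_deg2 deg_v) => w neq_wv.
by have := no_w w; rewrite neq_wv ltn_neqAle deg_ge2 andbT eq_sym => /negbT.
Qed.
End EightVerticesSixteenEdges.

Lemma K44_cut_count_lt k : 5 <= k <= 7 -> K44_cut_count k < n_supersets 16 k 2.
Proof.
have : all (fun k => K44_cut_count k < n_supersets 16 k 2) (iota 5 3) by vm_compute.
by move/allP/(_ k); rewrite mem_iota.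
Qed.

Unset Implicit Arguments.
Theorem mainTheorem5 (V : finType) (e : rel V) :
  simple_graph e -> #|V| = 8 -> #|edges e| = 16 -> min_degree_eq e 2 ->
  forall k, 5 <= k <= 8 -> m_k K44 k < m_k e k.
Proof.
move=> e_simple card_V card_E [deg_ge2 [v deg_v]] k /andP[ge5_k le_k8].
apply: leq_ltn_trans (m_k_K44_le k) _.
have [le_k7 | gt_k7] := leqP k 7.
  apply: leq_trans (K44_cut_count_lt _) _; first by rewrite ge5_k.
  have := n_supersets_degree_le_m_k e_simple (k := k) v.
  by rewrite card_V card_E deg_v => /(_ isT (@leq_trans 7 k 16 le_k7 isT)).
have -> : k = 8 by apply/anti_leq; rewrite le_k8.
exact: (m_8_gt e_simple card_V card_E deg_v deg_ge2).
Qed.
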